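(* Let $\rho_Z>0$, $p_Z\in\mathbb R$, $K_Z>0$, and set $p_{\infty,Z}=K_Z-p_Z$ and $c_Z=\sqrt{K_Z/\rho_Z}$. Define, for $p>-p_{\infty,Z}$, $$f^{\mathrm{exp}}_Z(p)=c_Z\log\Big(\frac{p+p_{\infty,Z}}{K_Z}\Big),\qquad f^{\mathrm{shock}}_Z(p)=\frac{p-p_Z}{\sqrt{\rho_Z(p+p_{\infty,Z})}}.$$ Then $f^{\mathrm{shock}}_Z(p)\ge f^{\mathrm{exp}}_Z(p)$ for all $p>p_Z$. *)

From Stdlib Require Import Reals Lra.
Open Scope R_scope.

Definition p_inf (pZ KZ : R) : R := KZ - pZ.
Definition cZ (rhoZ KZ : R) : R := sqrt (KZ / rhoZ).

Definition f_exp (rhoZ pZ KZ p : R) : R :=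
  cZ rhoZ KZ * ln ((p + p_inf pZ KZ) / KZ).

Definition f_shock (rhoZ pZ KZ p : R) : R :=
  (p - pZ) / sqrt (rhoZ * (p + p_inf pZ KZ)).

(* Put [x = (p + p_inf)/K_Z > 1]. Then [f_shock = c_Z (x - 1)/sqrt x] and
   [f_exp = c_Z ln x], so the claim is the logarithmic-mean inequality
   [ln x <= (x - 1)/sqrt x].  With [t = sqrt x] this reads
   [2 ln t <= t - 1/t], which holds at [t = 1] and propagates because the
   derivative of the difference is [(1 - 1/t)^2 >= 0]. *)
From Stdlib Require Import Reals Lra.
From Coquelicot Require Import Coquelicot.
Open Scope R_scope.

Lemma derivable_pt_lim_sub_inv_ln (t : R) : 0 < t ->
  derivable_pt_lim (fun u => u - / u - 2 * ln u) t ((1 - / t) ^ 2).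
Proof.
  intros Ht. apply is_derive_Reals.
  auto_derive; [lra | field; lra].
Qed.

Lemma two_ln_le_sub_inv (t : R) : 1 <= t -> 2 * ln t <= t - / t.
Proof.
  intros Ht. destruct (Req_dec t 1) as [-> | Hne].
  { rewrite ln_1, Rinv_1; lra. }
  destruct (MVT_cor2 (fun u => u - / u - 2 * ln u) (fun u => (1 - / u) ^ 2) 1 t)
    as [c [Hmvt Hc]]; [lra | |].
  { intros c Hc. apply derivable_pt_lim_sub_inv_ln; lra. }
  rewrite ln_1, Rinv_1 in Hmvt.
  assert (0 <= (1 - / c) ^ 2 * (t - 1)) by (apply Rmult_le_pos; [apply pow2_ge_0 | lra]).
  lra.
Qed.

Lemma ln_le_sub1_div_sqrt (x : R) : 1 <= x -> ln x <= (x - 1) / sqrt x.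
Proof.
  intros Hx.
  assert (Ht : 1 <= sqrt x) by (rewrite <- sqrt_1; apply sqrt_le_1_alt; lra).
  assert (Ex : sqrt x * sqrt x = x) by (apply sqrt_sqrt; lra).
  replace (ln x) with (2 * ln (sqrt x)) by (rewrite <- Ex at 2; rewrite ln_mult; lra).
  set (t := sqrt x) in *.
  replace ((x - 1) / t) with (t - / t) by (rewrite <- Ex; field; lra).
  now apply two_ln_le_sub_inv.
Qed.

Lemma f_shock_eq (rhoZ pZ KZ p : R) : 0 < rhoZ -> 0 < KZ -> 0 < p + p_inf pZ KZ ->
  let x := (p + p_inf pZ KZ) / KZ in
  f_shock rhoZ pZ KZ p = cZ rhoZ KZ * ((x - 1) / sqrt x).
Proof.
  intros Hrho HK Hq x. unfold f_shock, cZ, x.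
  set (q := p + p_inf pZ KZ) in *.
  replace (p - pZ) with (q - KZ) by (unfold q, p_inf; ring).
  rewrite sqrt_mult_alt, !sqrt_div_alt by lra.
  assert (0 < sqrt rhoZ) by (apply sqrt_lt_R0; lra).
  assert (0 < sqrt q) by (apply sqrt_lt_R0; lra).
  assert (0 < sqrt KZ) by (apply sqrt_lt_R0; lra).
  assert (EK : sqrt KZ * sqrt KZ = KZ) by (apply sqrt_sqrt; lra).
  set (b := sqrt KZ) in *. rewrite <- EK.
  field; lra.
Qed.

Theorem lemmaB1 (rhoZ pZ KZ : R) (hrho : 0 < rhoZ) (hK : 0 < KZ) (p : R) (hp : pZ < p) :
  f_shock rhoZ pZ KZ p >= f_exp rhoZ pZ KZ p.
Proof.
  assert (Hq : KZ < p + p_inf pZ KZ) by (unfold p_inf; lra).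
  rewrite f_shock_eq by lra. unfold f_exp.
  apply Rle_ge, Rmult_le_compat_l; [apply sqrt_pos |].
  apply ln_le_sub1_div_sqrt, Rle_div_r; lra.
Qed.
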